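(* Let $n\ge n'\ge 1$, let $p_1,\dots,p_n\ge 0$, and let $x_1,\dots,x_n$ and $x_{\{j\}\cup\{j'\}}$ ($j,j'\in\{1,\dots,n\}$) be reals with $x_{\{j\}\cup\{j'\}}=x_{\{j'\}\cup\{j\}}\ge 0$, $x_{\{j\}\cup\{j\}}=x_j\ge 0$, such that the $(n+1)\times(n+1)$ matrix $X$ indexed by $0,1,\dots,n$ with $X_{0,0}=1$, $X_{0,j}=X_{j,0}=x_j$, $X_{j,j'}=x_{\{j\}\cup\{j'\}}$ is positive semidefinite. Then for every subset $S\subseteq\{1,\dots,n'\}$, $$\sum_{j=1}^{n'}p_j\big(p_1x_{\{j\}\cup\{1\}}+\dots+p_jx_{\{j\}\cup\{j\}}\big)\ \ge\ \sum_{j\in\{1,\dots,n'\}\setminus S}x_jp_j^2+\frac12\Big(\sum_{j\in S}x_jp_j^2+\Big(\sum_{j\in S}x_jp_j\Big)^2\Big).$$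
   Context: This is the per-machine form of the constraints of the SDP relaxation: for a fixed machine $i$, $x_j$ stands for $x_{ij}$, $x_{\{j\}\cup\{j'\}}$ for $x_{\{ij\}\cup\{ij'\}}$, $p_j$ for $p_{ij}$, and $X$ is the moment matrix $X^{(i)}$. *)

From HB Require Import structures.
From mathcomp Require Import all_boot all_order all_algebra.
Set Implicit Arguments. Unset Strict Implicit. Unset Printing Implicit Defensive.
Import Order.TTheory GRing.Theory Num.Theory.
Local Open Scope ring_scope.

Definition psd (R : realFieldType) (m : nat) (A : 'M[R]_m) : Prop :=
  forall v : 'cV[R]_m, 0 <= (v^T *m A *m v) 0 0.

(* The moment matrix X indexed by 0..n: index 0 is ord0, index j+1 is lift ord0 j. *)
Definition moment_mx (R : realFieldType) (n : nat) (x : 'I_n -> R)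
  (y : 'I_n -> 'I_n -> R) : 'M[R]_(n.+1) :=
  \matrix_(a < n.+1, b < n.+1)
    match split (a : 'I_(1 + n)), split (b : 'I_(1 + n)) with
    | inl _, inl _ => 1
    | inl _, inr j => x j
    | inr j, inl _ => x j
    | inr j, inr j' => y j j'
    end.

(* The positive semidefiniteness of the moment matrix, tested against the vector
   (t, -p_S) with t = sum_(j in S) x_j p_j, gives t^2 <= sum_(j,j' in S) p_j p_j' y_{jj'},
   i.e. t^2 <= D + 2 W where D = sum_(j in S) x_j p_j^2 and W collects the pairs j' < j of S.
   The left-hand side splits into its diagonal part sum_(j < n') x_j p_j^2 and its strictly
   lower part, which dominates W because all terms are nonnegative; hence it is at least
   sum_(j notin S) x_j p_j^2 + D + W >= sum_(j notin S) x_j p_j^2 + (D + t^2) / 2. *)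
From HB Require Import structures.
From mathcomp Require Import all_boot all_order all_algebra.
From mathcomp Require Import ring lra.
Import Order.TTheory GRing.Theory Num.Theory.
Local Open Scope ring_scope.

Lemma split_ord0 n : split (ord0 : 'I_(1 + n)) = inl (ord0 : 'I_1).
Proof.
have -> : (ord0 : 'I_(1 + n)) = unsplit (inl ord0) by apply: val_inj.
by rewrite unsplitK.
Qed.

Lemma split_lift0 n (i : 'I_n) : split (lift ord0 i : 'I_(1 + n)) = inr i.
Proof.
have -> : (lift ord0 i : 'I_(1 + n)) = unsplit (inr i) by apply: val_inj.
by rewrite unsplitK.
Qed.

Lemma ler_sum_subset {R : numDomainType} {I : finType} (P Q : pred I) (F : I -> R) :
  (forall i, Q i -> P i) -> (forall i, P i -> 0 <= F i) ->
  \sum_(i | Q i) F i <= \sum_(i | P i) F i.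
Proof.
move=> QP F0; rewrite [X in _ <= X](bigID Q) /=.
rewrite (eq_bigl Q) => [|i]; last by case: (boolP (Q i)) => [/QP ->|]; rewrite ?andbF.
by rewrite lerDl sumr_ge0 // => i /andP[/F0].
Qed.

Lemma sum_sym_pairsE (R : zmodType) n (A : pred 'I_n) (f : 'I_n -> 'I_n -> R) :
  (forall i j, f i j = f j i) ->
  \sum_(i | A i) \sum_(j | A j) f i j
  = \sum_(i | A i) f i i + (\sum_(i | A i) \sum_(j | A j && (j < i)%N) f i j) *+ 2.
Proof.
move=> fsym.
have split_row i : A i -> \sum_(j | A j) f i j
    = f i i + \sum_(j | A j && (j < i)%N) f i j + \sum_(j | A j && (i < j)%N) f i j.
  move=> Ai; rewrite (bigD1 i) //= (bigID (fun j : 'I_n => (j < i)%N)) /= addrA.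
  congr (_ + _ + _); apply: eq_bigl => j; case: (eqVneq j i) => [->|ne_ji];
    rewrite ?ltnn ?andbF ?andbT //.
  by rewrite -leqNgt ltn_neqAle eq_sym ne_ji.
have upper_to_lower : \sum_(i | A i) \sum_(j | A j && (i < j)%N) f i j
    = \sum_(i | A i) \sum_(j | A j && (j < i)%N) f i j.
  rewrite (exchange_big_dep A) /=; last by move=> i j _ /andP[].
  apply: eq_bigr => i Ai; apply: eq_big => [j|j _]; last exact: fsym.
  by rewrite Ai.
by rewrite (eq_bigr _ split_row) !big_split /= upper_to_lower mulr2n addrA.
Qed.

Lemma sum_lower_triangleE (R : comPzRingType) n (P : pred 'I_n) (p : 'I_n -> R)
    (y : 'I_n -> 'I_n -> R) :
  \sum_(j | P j) p j * (\sum_(j' : 'I_n | (j' <= j)%N) p j' * y j j')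
  = \sum_(j | P j) y j j * p j ^+ 2
    + \sum_(j | P j) \sum_(j' : 'I_n | (j' < j)%N) p j * p j' * y j j'.
Proof.
rewrite -big_split /=; apply: eq_bigr => j _.
rewrite (bigD1 j (leqnn j)) mulrDr mulr_sumr; congr (_ + _); first ring.
apply: eq_big => [k|k _]; first by rewrite ltn_neqAle andbC.
by rewrite mulrA.
Qed.

Section MomentMatrix.
Context {R : realFieldType} {n : nat} {x : 'I_n -> R} {y : 'I_n -> 'I_n -> R}.

Definition moment_test_vec (t : R) (c : 'I_n -> R) : 'cV[R]_(n.+1) :=
  \col_(a < n.+1) match split (a : 'I_(1 + n)) with inl _ => t | inr j => - c j end.

Lemma moment_mx_form (t : R) (c : 'I_n -> R) :
  let v := moment_test_vec t c in
  (v^T *m moment_mx x y *m v) 0 0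
  = t ^+ 2 - 2 * t * (\sum_i c i * x i) + \sum_i \sum_k c i * c k * y k i.
Proof.
rewrite /= /moment_test_vec !mxE big_ord_recl /= !mxE big_ord_recl /= !mxE split_ord0.
under eq_bigr => i _ do rewrite !mxE ?split_ord0 ?split_lift0.
under [X in _ * t + X]eq_bigr => i _ do
  rewrite !mxE big_ord_recl !mxE ?split_ord0 ?split_lift0.
under [X in _ * t + X]eq_bigr => i _ do
  under eq_bigr => k _ do rewrite !mxE ?split_ord0 ?split_lift0.
have -> : \sum_i - c i * x i = - \sum_i c i * x i.
  by rewrite -sumrN; apply: eq_bigr => i _; ring.
have -> : \sum_(i < n) (t * x i + \sum_k - c k * y k i) * - c i
    = - t * \sum_i c i * x i + \sum_i \sum_k c i * c k * y k i.
  rewrite mulr_sumr -big_split /=; apply: eq_bigr => i _.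
  rewrite mulrDl mulr_suml; congr (_ + _); first ring.
  by apply: eq_bigr => k _; ring.
ring.
Qed.

Lemma psd_moment_sqr_le (A : pred 'I_n) (c : 'I_n -> R) :
  psd (moment_mx x y) ->
  (\sum_(i | A i) c i * x i) ^+ 2 <= \sum_(i | A i) \sum_(k | A k) c i * c k * y k i.
Proof.
pose cA i := if A i then c i else 0.
have cAx : \sum_i cA i * x i = \sum_(i | A i) c i * x i.
  by rewrite [RHS]big_mkcond; apply: eq_bigr => i _; rewrite /cA; case: ifP; rewrite ?mul0r.
have cAy : \sum_i \sum_k cA i * cA k * y k i
    = \sum_(i | A i) \sum_(k | A k) c i * c k * y k i.
  rewrite [RHS]big_mkcond; apply: eq_bigr => i _; rewrite /cA; case: ifP => _.
    by rewrite [RHS]big_mkcond; apply: eq_bigr => k _; case: ifP; rewrite ?mulr0 ?mul0r.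
  by rewrite big1 // => k _; rewrite !mul0r.
move=> /(_ (moment_test_vec (\sum_i cA i * x i) cA)).
by rewrite moment_mx_form cAx cAy => h; lra.
Qed.

End MomentMatrix.

Theorem lemma1 (R : realFieldType) (n n' : nat) (p x : 'I_n -> R)
  (y : 'I_n -> 'I_n -> R)
  (hn' : (1 <= n')%N) (hnn' : (n' <= n)%N)
  (hp : forall j, 0 <= p j)
  (hsym : forall j j', y j j' = y j' j)
  (hy0 : forall j j', 0 <= y j j')
  (hdiag : forall j, y j j = x j)
  (hx0 : forall j, 0 <= x j)
  (hX : psd (moment_mx x y))
  (S : {set 'I_n}) (hS : forall j, j \in S -> (j < n')%N) :
  \sum_(j : 'I_n | (j < n')%N) p j * (\sum_(j' : 'I_n | (j' <= j)%N) p j' * y j j')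
  >= \sum_(j : 'I_n | ((j < n')%N && (j \notin S))) x j * p j ^+ 2
     + 2^-1 * (\sum_(j in S) x j * p j ^+ 2 + (\sum_(j in S) x j * p j) ^+ 2).
Proof.
pose f j j' := p j * p j' * y j j'.
have f0 j j' : 0 <= f j j' by rewrite !mulr_ge0.
set t := \sum_(j in S) x j * p j.
set D := \sum_(j in S) x j * p j ^+ 2.
pose W := \sum_(j in S) \sum_(j' | (j' \in S) && (j' < j)%N) f j j'.
have t2_le : t ^+ 2 <= D + W *+ 2.
  have := psd_moment_sqr_le (fun j => j \in S) p hX.
  have -> : \sum_(j in S) p j * x j = t by apply: eq_bigr => j _; rewrite mulrC.
  rewrite sum_sym_pairsE => [|j k]; last by rewrite hsym (mulrC (p j)).
  congr (_ <= _ + _ *+ 2).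
    by apply: eq_bigr => j _; rewrite hdiag; ring.
  by apply: eq_bigr => j _; apply: eq_bigr => k _; rewrite /f hsym.
have diagE : \sum_(j : 'I_n | (j < n')%N) x j * p j ^+ 2
    = \sum_(j : 'I_n | (j < n')%N && (j \notin S)) x j * p j ^+ 2 + D.
  rewrite (bigID (mem S)) /= addrC; congr (_ + _); apply: eq_bigl => j /=.
  by case: (boolP (j \in S)) => [/hS ->|]; rewrite ?andbT ?andbF.
have W_le : W <= \sum_(j : 'I_n | (j < n')%N) \sum_(j' : 'I_n | (j' < j)%N) f j j'.
  apply: (le_trans (ler_sum _ _)) => [j _|].
    by apply: (ler_sum_subset (fun j' : 'I_n => (j' < j)%N)) => [k /andP[]|].
  by apply: ler_sum_subset => [j /hS|j _]; last exact: sumr_ge0.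
have lhsE : \sum_(j : 'I_n | (j < n')%N) p j * (\sum_(j' : 'I_n | (j' <= j)%N) p j' * y j j')
    = \sum_(j : 'I_n | (j < n')%N) x j * p j ^+ 2
      + \sum_(j : 'I_n | (j < n')%N) \sum_(j' : 'I_n | (j' < j)%N) f j j'.
  by rewrite sum_lower_triangleE; congr (_ + _); apply: eq_bigr => j _; rewrite hdiag.
rewrite lhsE diagE; lra.
Qed.
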